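(* Let $\rho:E\to B$ be a universal stream covering, where $B$ is a path-ordered stream. The following are equivalent: (1) the preorder $\leqslant_E$ is antisymmetric; (2) every stream map $\vec{\mathbb{S}}\to B$ whose underlying continuous map $\mathbb{S}\to UB$ is null-homotopic is constant.
   Context: A circulation on a space $X$ assigns to each open $V\subset X$ a preorder $\leqslant_V$ on $V$ such that for every collection $\mathcal{O}$ of open sets, $\leqslant_{\bigcup\mathcal{O}}$ is the preorder with smallest graph containing $\bigcup_{V\in\mathcal{O}}\mathrm{graph}(\leqslant_V)$. A stream is a space with a circulation ($\leqslant_X$ is the preorder on $X$ itself); a stream map $f:X\to Y$ is continuous with $f(x)\leqslant_V f(y)$ whenever $x\leqslant_{f^{-1}V}y$ for all open $V\subset Y$. $U$ denotes the forgetful functor to spaces. $\vec\square[1]$ is $[0,1]$ with circulation $x\leqslant_V y$ iff $x\le y$ and $[x,y]\subset V$; a dipath on a stream $X$ is a stream map $\vec\square[1]\to X$. $X$ is path-ordered if whenever $V\subset X$ is open and $x\leqslant_V y$, there is a dipath from $x$ to $y$ with image in $V$. $\vec{\mathbb{S}}$ is the unit circle $\mathbb{S}\subset\mathbb{C}$ with circulation: $z\leqslant_V z'$ iff there exist reals $\theta\le\theta'$ with $z=e^{i\theta}$, $z'=e^{i\theta'}$ and $e^{i[\theta,\theta']}\subset V$. An open substream of $X$ is an open set $V$ with circulation $W\mapsto\leqslant_W$ ($W\subset V$ open). A stream covering is a surjective stream map $\rho:E\to B$ such that $B$ is covered by open substreams whose preimages are disjoint unions of open substreams each mapped by $\rho$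 isomorphically (as streams) onto the corresponding open substream; it is universal if $U\rho$ is a universal covering of spaces. *)

From Stdlib Require Import Reals Lra.
Open Scope R_scope.

Definition set (X : Type) := X -> Prop.

Record Space := { pt : Type; opn : set pt -> Prop }.

Definition union_fam {T : Type} (O : set (set T)) : set T :=
  fun x => exists V, O V /\ V x.

Definition is_topology (X : Space) : Prop :=
  opn X (fun _ => True) /\
  (forall O : set (set (pt X)), (forall V, O V -> opn X V) -> opn X (union_fam O)) /\
  (forall U V, opn X U -> opn X V -> opn X (fun x => U x /\ V x)).

Definition continuous (X Y : Space) (f : pt X -> pt Y) : Prop :=
  forall V, opn Y V -> opn X (fun x => V (f x)).

Definition image {A B : Type} (f : A -> B) (W : set A) : set B :=
  fun b => exists a, W a /\ f a = b.

Definition prod_space (X Y : Space) : Space :=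
  {| pt := (pt X * pt Y)%type;
     opn := fun W => forall p, W p ->
       exists U V, opn X U /\ opn Y V /\ U (fst p) /\ V (snd p) /\
         (forall a b, U a -> V b -> W (a, b)) |}.

Definition I_pt := { x : R | 0 <= x <= 1 }.

Definition I_space : Space :=
  {| pt := I_pt;
     opn := fun V => forall x, V x -> exists eps, 0 < eps /\
              forall y : I_pt, Rabs (proj1_sig y - proj1_sig x) < eps -> V y |}.

Lemma I0_prf : 0 <= 0 <= 1. Proof. lra. Qed.
Lemma I1_prf : 0 <= 1 <= 1. Proof. lra. Qed.
Definition I0 : I_pt := exist _ 0 I0_prf.
Definition I1 : I_pt := exist _ 1 I1_prf.

Definition S_pt := { p : R * R | (fst p)^2 + (snd p)^2 = 1 }.

Lemma cis_prf (t : R) : (fst (cos t, sin t))^2 + (snd (cos t, sin t))^2 = 1.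
Proof. simpl. pose proof (sin2_cos2 t) as H. unfold Rsqr in H. nra. Qed.

Definition cis (t : R) : S_pt := exist _ (cos t, sin t) (cis_prf t).

Definition S_dist (z w : S_pt) : R :=
  sqrt ((fst (proj1_sig z) - fst (proj1_sig w))^2 + (snd (proj1_sig z) - snd (proj1_sig w))^2).

Definition S_space : Space :=
  {| pt := S_pt;
     opn := fun V => forall z, V z -> exists eps, 0 < eps /\
              forall w : S_pt, S_dist z w < eps -> V w |}.

Definition null_homotopic (X Y : Space) (f : pt X -> pt Y) : Prop :=
  exists H : pt X * I_pt -> pt Y,
    continuous (prod_space X I_space) Y H /\
    (forall x, H (x, I0) = f x) /\
    (exists c, forall x, H (x, I1) = c).

Definition path_connected (X : Space) : Prop :=
  forall x y : pt X, exists g : I_pt -> pt X,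
    continuous I_space X g /\ g I0 = x /\ g I1 = y.

Definition simply_connected (X : Space) : Prop :=
  path_connected X /\
  forall f : S_pt -> pt X, continuous S_space X f -> null_homotopic S_space X f.

Definition homeo_onto {X Y : Space} (p : pt X -> pt Y) (W : set (pt X)) (V : set (pt Y)) : Prop :=
  (forall x, W x -> V (p x)) /\
  (forall x y, W x -> W y -> p x = p y -> x = y) /\
  (forall b, V b -> exists x, W x /\ p x = b) /\
  (forall V', opn Y V' -> (forall b, V' b -> V b) -> opn X (fun x => W x /\ V' (p x))) /\
  (forall W', opn X W' -> (forall x, W' x -> W x) -> opn Y (image p W')).

Definition evenly_covered {X Y : Space} (p : pt X -> pt Y) (V : set (pt Y))
  (good : set (pt X) -> Prop) : Prop :=
  exists F : set (set (pt X)),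
    (forall W, F W -> opn X W /\ good W) /\
    (forall W W', F W -> F W' -> W <> W' -> forall x, W x -> W' x -> False) /\
    (forall x, V (p x) <-> union_fam F x).

Definition covering_map (X Y : Space) (p : pt X -> pt Y) : Prop :=
  continuous X Y p /\
  (forall b, exists x, p x = b) /\
  exists Vs : set (set (pt Y)),
    (forall b, exists V, Vs V /\ V b) /\
    (forall V, Vs V -> opn Y V /\ evenly_covered p V (fun W => homeo_onto p W V)).

Definition universal_covering (X Y : Space) (p : pt X -> pt Y) : Prop :=
  covering_map X Y p /\ simply_connected X.

Record Stream := { U : Space; circ : set (pt (U)) -> pt U -> pt U -> Prop }.

Definition preorder_on {T : Type} (S : set T) (R : T -> T -> Prop) : Prop :=
  (forall x y, R x y -> S x /\ S y) /\
  (forall x, S x -> R x x) /\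
  (forall x y z, R x y -> R y z -> R x z).

Definition is_circulation (X : Stream) : Prop :=
  (forall V, opn (U X) V -> preorder_on V (circ X V)) /\
  forall O : set (set (pt (U X))), (forall V, O V -> opn (U X) V) ->
    let S := union_fam O in
    let G := fun x y => exists V, O V /\ circ X V x y in
    preorder_on S (circ X S) /\
    (forall x y, G x y -> circ X S x y) /\
    (forall R, preorder_on S R -> (forall x y, G x y -> R x y) ->
       forall x y, circ X S x y -> R x y).

Definition is_stream (X : Stream) : Prop := is_topology (U X) /\ is_circulation X.

Definition stream_map (X Y : Stream) (f : pt (U X) -> pt (U Y)) : Prop :=
  continuous (U X) (U Y) f /\
  forall V, opn (U Y) V -> forall x y,
    circ X (fun z => V (f z)) x y -> circ Y V (f x) (f y).

Definition dI : Stream :=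
  {| U := I_space;
     circ := fun V x y => proj1_sig x <= proj1_sig y /\
               forall z : I_pt, proj1_sig x <= proj1_sig z <= proj1_sig y -> V z |}.

Definition dS : Stream :=
  {| U := S_space;
     circ := fun V z z' => exists th th', th <= th' /\ z = cis th /\ z' = cis th' /\
               forall t, th <= t <= th' -> V (cis t) |}.

Definition dipath (X : Stream) (g : I_pt -> pt (U X)) : Prop := stream_map dI X g.

Definition path_ordered (X : Stream) : Prop :=
  forall V, opn (U X) V -> forall x y, circ X V x y ->
    exists g, dipath X g /\ g I0 = x /\ g I1 = y /\ forall t, V (g t).

Definition stream_iso_onto {E B : Stream} (rho : pt (U E) -> pt (U B))
  (W : set (pt (U E))) (V : set (pt (U B))) : Prop :=
  homeo_onto rho W V /\
  (forall V', opn (U B) V' -> (forall b, V' b -> V b) ->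
     forall x y, circ E (fun z => W z /\ V' (rho z)) x y -> circ B V' (rho x) (rho y)) /\
  (forall W', opn (U E) W' -> (forall z, W' z -> W z) ->
     forall x y, W x -> W y -> circ B (image rho W') (rho x) (rho y) -> circ E W' x y).

Definition stream_covering (E B : Stream) (rho : pt (U E) -> pt (U B)) : Prop :=
  stream_map E B rho /\
  (forall b, exists x, rho x = b) /\
  exists Vs : set (set (pt (U B))),
    (forall b, exists V, Vs V /\ V b) /\
    (forall V, Vs V -> opn (U B) V /\ evenly_covered rho V (fun W => stream_iso_onto rho W V)).

Definition universal_stream_covering (E B : Stream) (rho : pt (U E) -> pt (U B)) : Prop :=
  stream_covering E B rho /\ universal_covering (U E) (U B) rho.

Definition full {T : Type} : set T := fun _ => True.

(* (1) -> (2).  A null-homotopic loop f lifts, by homotopy lifting over the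
   rectangle [0,2pi] x [0,1], to a closed path l in E over f(e^{i.}).  As f is
   a stream map and rho is locally an isomorphism of streams, l is increasing
   for <=_E; so l 0 <= l t <= l 2pi = l 0 and antisymmetry makes l, hence f,
   constant.
   (2) -> (1).  If x <=_E y <=_E x, then, B being path-ordered and E being
   covered by sheets isomorphic to open substreams of B, there are dipaths
   x ~> y and y ~> x in E.  Glued along the two halves of the circle they give
   a stream map from the directed circle to E, null-homotopic since E is simply
   connected; its projection is constant by (2), and a lift of a constant path
   is constant, so x = y. *)

From Stdlib Require Import Reals.
From Stdlib Require Import Lra Classical ClassicalEpsilon FunctionalExtensionality PropExtensionality ProofIrrelevance.
Open Scope R_scope.

(* This is our form of compactness. *)
Lemma cousin_interval (G : R -> R -> Prop) (a b : R) : a <= b ->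
  (forall t, a <= t <= b -> exists d, 0 < d /\
     forall u v, a <= u -> u <= t -> t <= v -> v <= b -> v - u < d -> G u v) ->
  (forall u v w, a <= u -> u <= v -> v <= w -> w <= b -> G u v -> G v w -> G u w) ->
  G a b.
Proof.
  intros Hab Hloc Hcat.
  set (S := fun x => a <= x <= b /\ G a x).
  assert (Sa : S a).
  { split; [lra|]. destruct (Hloc a) as [d [Hd H]]; [lra|]. apply H; lra. }
  assert (Sbnd : bound S) by (exists b; intros x [Hx _]; lra).
  destruct (completeness S Sbnd (ex_intro _ a Sa)) as [m [Hub Hlub]].
  assert (Ham : a <= m) by (apply Hub; exact Sa).
  assert (Hmb : m <= b) by (apply Hlub; intros x [Hx _]; lra).
  destruct (Hloc m) as [d [Hd Hm]]; [lra|].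
  assert (Hclose : exists x, S x /\ m - d < x).
  { apply NNPP. intro Hn. assert (Hup : is_upper_bound S (m - d)).
    { intros x Sx. destruct (Rle_or_lt x (m - d)) as [h|h]; auto.
      exfalso. apply Hn. exists x. auto. }
    apply Hlub in Hup. lra. }
  destruct Hclose as [x [[Hx Gx] Hxd]].
  assert (Hxm : x <= m) by (apply Hub; split; auto).
  assert (Gam : G a m) by (apply Hcat with x; try lra; auto; apply Hm; lra).
  destruct (Rle_or_lt b m) as [h|h].
  - replace b with m by lra. exact Gam.
  - exfalso. set (v := Rmin b (m + d/2)).
    assert (Hvb : v <= b) by apply Rmin_l.
    assert (Hvd : v <= m + d/2) by apply Rmin_r.
    assert (Hmv : m < v) by (apply Rmin_glb_lt; lra).
    assert (Sv : S v) by (split; [lra|]; apply Hcat with m; try lra; auto; apply Hm; lra).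
    apply Hub in Sv. lra.
Qed.

Lemma cousin_rectangle (G : R -> R -> R -> R -> Prop) a b c d : a <= b -> c <= d ->
  (forall x y, a <= x <= b -> c <= y <= d -> exists e, 0 < e /\ forall x1 x2 y1 y2,
     a <= x1 -> x1 <= x -> x <= x2 -> x2 <= b -> c <= y1 -> y1 <= y -> y <= y2 -> y2 <= d ->
     x2 - x1 < e -> y2 - y1 < e -> G x1 x2 y1 y2) ->
  (forall x1 x2 x3 y1 y2, a <= x1 -> x1 <= x2 -> x2 <= x3 -> x3 <= b ->
     c <= y1 -> y1 <= y2 -> y2 <= d ->
     G x1 x2 y1 y2 -> G x2 x3 y1 y2 -> G x1 x3 y1 y2) ->
  (forall x1 x2 y1 y2 y3, a <= x1 -> x1 <= x2 -> x2 <= b ->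
     c <= y1 -> y1 <= y2 -> y2 <= y3 -> y3 <= d ->
     G x1 x2 y1 y2 -> G x1 x2 y2 y3 -> G x1 x2 y1 y3) ->
  G a b c d.
Proof.
  intros Hab Hcd Hloc Hh Hv.
  apply (cousin_interval (fun y1 y2 => G a b y1 y2) c d Hcd).
  2:{ intros u v w ? ? ? ? ? ?. apply Hv with v; lra || auto. }
  intros y Hy.
  (* For fixed y, run Cousin's lemma horizontally on "G holds on thin strips around y". *)
  set (Strip := fun x1 x2 => exists e, 0 < e /\ forall y1 y2,
         c <= y1 -> y1 <= y -> y <= y2 -> y2 <= d -> y2 - y1 < e -> G x1 x2 y1 y2).
  assert (HS : Strip a b).
  { apply (cousin_interval Strip a b Hab).
    - intros x Hx. destruct (Hloc x y Hx Hy) as [e [He H]].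
      exists e. split; [exact He|]. intros u v ? ? ? ? ?. exists e. split; [exact He|].
      intros. apply H; auto.
    - intros u v w ? ? ? ? [e1 [He1 H1]] [e2 [He2 H2]].
      exists (Rmin e1 e2). split; [apply Rmin_glb_lt; auto|].
      intros y1 y2 ? ? ? ? ?. pose proof (Rmin_l e1 e2). pose proof (Rmin_r e1 e2).
      apply (Hh u v w y1 y2); try lra; [apply H1|apply H2]; auto; lra. }
  destruct HS as [e [He H]]. exists e. split; auto.
Qed.

Lemma abs_lt_of a b e : a - e < b -> b < a + e -> Rabs (b - a) < e.
Proof. intros. apply Rabs_def1; lra. Qed.

Lemma abs_le_b x a : Rabs x <= a -> - a <= x <= a.
Proof. intros. pose proof (Rle_abs x). pose proof (Rle_abs (-x)). rewrite Rabs_Ropp in *. lra. Qed.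

Lemma PI_gt3 : 3 < PI.
Proof. pose proof PI2_3_2. lra. Qed.

Lemma sin_abs_le x : Rabs (sin x) <= Rabs x.
Proof.
  assert (Hpos : forall y, 0 < y -> Rabs (sin y) <= y).
  { intros y Hy. pose proof (sin_lt_x y Hy). pose proof (SIN_bound y). pose proof PI_gt3.
    destruct (Rle_or_lt 1 y).
    - apply Rabs_le; lra.
    - assert (0 <= sin y) by (apply sin_ge_0; lra). apply Rabs_le; lra. }
  destruct (Rtotal_order x 0) as [h|[h|h]].
  - rewrite <- (Ropp_involutive x), sin_neg, Rabs_Ropp, Rabs_Ropp, (Rabs_right (-x)) by lra. apply Hpos; lra.
  - subst. rewrite sin_0, Rabs_R0. lra.
  - rewrite (Rabs_right x) by lra. apply Hpos; lra.
Qed.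

Lemma abs_half a : Rabs (a / 2) = Rabs a / 2.
Proof. unfold Rdiv. rewrite Rabs_mult, (Rabs_right (/2)) by lra. reflexivity. Qed.

Lemma sin_lip a b : Rabs (sin a - sin b) <= Rabs (a - b).
Proof.
  rewrite form4, !Rabs_mult, (Rabs_right 2) by lra.
  pose proof (sin_abs_le ((a - b)/2)) as Hs. rewrite abs_half in Hs.
  pose proof (COS_bound ((a + b)/2)).
  assert (Rabs (cos ((a + b) / 2)) <= 1) by (apply Rabs_le; lra).
  pose proof (Rabs_pos (sin ((a - b) / 2))). pose proof (Rabs_pos (cos ((a + b) / 2))).
  nra.
Qed.

Lemma cos_lip a b : Rabs (cos a - cos b) <= Rabs (a - b).
Proof.
  rewrite form2, !Rabs_mult.
  replace (Rabs (-2)) with 2 by (rewrite Rabs_left by lra; lra).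
  pose proof (sin_abs_le ((a - b)/2)) as Hs. rewrite abs_half in Hs.
  pose proof (SIN_bound ((a + b)/2)).
  assert (Rabs (sin ((a + b) / 2)) <= 1) by (apply Rabs_le; lra).
  pose proof (Rabs_pos (sin ((a - b) / 2))). pose proof (Rabs_pos (sin ((a + b) / 2))).
  nra.
Qed.

Lemma S_dist_cis a b : S_dist (cis a) (cis b) <= 2 * Rabs (a - b).
Proof.
  unfold S_dist, cis; simpl.
  pose proof (cos_lip a b). pose proof (sin_lip a b). pose proof (Rabs_pos (a - b)).
  rewrite <- (sqrt_square (2 * Rabs (a - b))) by lra.
  apply sqrt_le_1_alt.
  assert ((cos a - cos b)^2 <= Rabs (a - b) * Rabs (a - b)).
  { rewrite <- (pow2_abs (cos a - cos b)). pose proof (Rabs_pos (cos a - cos b)). simpl. nra. }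
  assert ((sin a - sin b)^2 <= Rabs (a - b) * Rabs (a - b)).
  { rewrite <- (pow2_abs (sin a - sin b)). pose proof (Rabs_pos (sin a - sin b)). simpl. nra. }
  nra.
Qed.

Lemma fst_le_dist z w : Rabs (fst (proj1_sig z) - fst (proj1_sig w)) <= S_dist z w.
Proof.
  unfold S_dist. rewrite <- sqrt_Rsqr_abs. apply sqrt_le_1_alt. unfold Rsqr.
  pose proof (pow2_ge_0 (snd (proj1_sig z) - snd (proj1_sig w))). simpl in *. nra.
Qed.

Lemma snd_le_dist z w : Rabs (snd (proj1_sig z) - snd (proj1_sig w)) <= S_dist z w.
Proof.
  unfold S_dist. rewrite <- sqrt_Rsqr_abs. apply sqrt_le_1_alt. unfold Rsqr.
  pose proof (pow2_ge_0 (fst (proj1_sig z) - fst (proj1_sig w))). simpl in *. nra.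
Qed.

(* Clamping a real number into [0,1] gives a 1-Lipschitz retraction R -> I,
   which lets us treat maps on I as maps on R. *)
Definition clampR t := Rmax 0 (Rmin 1 t).

Lemma clamp_prf t : 0 <= clampR t <= 1.
Proof. unfold clampR. split; [apply Rmax_l|]. apply Rmax_lub; [lra|apply Rmin_l]. Qed.

Definition clampI t : I_pt := exist _ (clampR t) (clamp_prf t).

Lemma I_eq (s t : I_pt) : proj1_sig s = proj1_sig t -> s = t.
Proof. destruct s as [s hs], t as [t ht]; simpl; intros ->. f_equal. apply proof_irrelevance. Qed.

Lemma clampR_id t : 0 <= t <= 1 -> clampR t = t.
Proof. intros. unfold clampR. rewrite Rmin_right, Rmax_right by lra. reflexivity. Qed.

Lemma clampI_val t : 0 <= t <= 1 -> proj1_sig (clampI t) = t.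
Proof. apply clampR_id. Qed.

Lemma clampI_id (s : I_pt) : clampI (proj1_sig s) = s.
Proof. apply I_eq. apply clampI_val. destruct s; auto. Qed.

Lemma clampI_0 : clampI 0 = I0.
Proof. apply I_eq. simpl. apply clampR_id. lra. Qed.

Lemma clampI_1 : clampI 1 = I1.
Proof. apply I_eq. simpl. apply clampR_id. lra. Qed.

Lemma clampR_lip a b : Rabs (clampR a - clampR b) <= Rabs (a - b).
Proof.
  pose proof (Rle_abs (a - b)). pose proof (Rle_abs (-(a - b))). rewrite Rabs_Ropp in *.
  unfold clampR, Rmax, Rmin. repeat (destruct Rle_dec); apply Rabs_le; split; lra.
Qed.

Lemma S_eq (z w : S_pt) : proj1_sig z = proj1_sig w -> z = w.
Proof. destruct z as [z hz], w as [w hw]; simpl; intros ->. f_equal. apply proof_irrelevance. Qed.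

Lemma S_unit (z : S_pt) :
  fst (proj1_sig z) * fst (proj1_sig z) + snd (proj1_sig z) * snd (proj1_sig z) = 1.
Proof. destruct z as [[x y] h]. simpl in *. nra. Qed.

Lemma cis_2PI : cis (2 * PI) = cis 0.
Proof. apply S_eq. simpl. rewrite cos_2PI, sin_2PI, cos_0, sin_0. reflexivity. Qed.

Lemma cont_cos_minus w : continuity (fun s => cos s - w).
Proof.
  change (continuity (cos - fct_cte w)%F).
  apply continuity_minus; [apply continuity_cos|apply continuity_const]. intros ? ?. reflexivity.
Qed.

Lemma cos_ivt u v c : u <= v -> (cos u - c) * (cos v - c) <= 0 ->
  exists r, u <= r <= v /\ cos r = c.
Proof.
  intros Huv Hc. destruct (IVT_cor (fun s => cos s - c) u v (cont_cos_minus c) Huv Hc) as [r [Hr Hr0]].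
  exists r. split; auto. lra.
Qed.

Lemma angle_exists (z : S_pt) : exists th, 0 <= th <= 2 * PI /\ z = cis th.
Proof.
  destruct z as [[x y] hz]. simpl in hz. pose proof PI_gt3.
  destruct (cos_ivt 0 PI x) as [t0 [Ht0 Hcx]]; [lra| rewrite cos_0, cos_PI; nra |].
  assert (Hs : 0 <= sin t0) by (apply sin_ge_0; lra).
  pose proof (sin2_cos2 t0) as Hsc. unfold Rsqr in Hsc.
  destruct (Rle_or_lt 0 y).
  - exists t0. split; [lra|]. apply S_eq. simpl. f_equal; auto. nra.
  - exists (2 * PI - t0). split; [lra|]. apply S_eq. simpl.
    rewrite cos_minus, sin_minus, cos_2PI, sin_2PI. f_equal; nra.
Qed.

Lemma set_ext {T} (A B : set T) : (forall x, A x <-> B x) -> A = B.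
Proof.
  intros H. apply functional_extensionality. intros x. apply propositional_extensionality. auto.
Qed.

Section Circulations.
Variable X : Stream.
Hypothesis HX : is_circulation X.

Lemma circ_trans V x y z : opn (U X) V -> circ X V x y -> circ X V y z -> circ X V x z.
Proof. intros HV. destruct (proj1 HX V HV) as [_ [_ T]]. apply T. Qed.

Lemma circ_refl V x : opn (U X) V -> V x -> circ X V x x.
Proof. intros HV. destruct (proj1 HX V HV) as [_ [R _]]. apply R. Qed.

Lemma circ_dom V x y : opn (U X) V -> circ X V x y -> V x /\ V y.
Proof. intros HV. destruct (proj1 HX V HV) as [D _]. apply D. Qed.

(* Monotonicity, from the gluing axiom applied to the family {W, O}. *)
Lemma circ_mono W O x y : opn (U X) W -> opn (U X) O ->
  (forall z, W z -> O z) -> circ X W x y -> circ X O x y.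
Proof.
  intros HW HO Hsub Hc.
  set (Fm := fun V : set (pt (U X)) => V = W \/ V = O).
  destruct (proj2 HX Fm) as [_ [Hgen _]]; [intros V [-> | ->]; auto|].
  assert (Heq : union_fam Fm = O).
  { apply set_ext. intros z. split.
    - intros [V [[-> | ->] Hz]]; auto.
    - intros Hz. exists O. split; auto. right; auto. }
  rewrite <- Heq. apply Hgen. exists W. split; auto. left; auto.
Qed.

End Circulations.

Lemma stream_map_comp (X Y Z : Stream) f g :
  stream_map X Y f -> stream_map Y Z g -> stream_map X Z (fun x => g (f x)).
Proof.
  intros [fC fS] [gC gS]. split.
  - intros V Vo. apply (fC (fun y => V (g y))). apply gC; auto.
  - intros V Vo x y Hxy. apply (gS V Vo). apply (fS (fun y => V (g y)) (gC V Vo)). exact Hxy.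
Qed.

Lemma null_homotopic_comp (X Y Z : Space) f g :
  null_homotopic X Y f -> continuous Y Z g -> null_homotopic X Z (fun x => g (f x)).
Proof.
  intros [H [HC [H0 [c H1]]]] gC. exists (fun p => g (H p)). split; [|split].
  - intros V Vo. apply (HC (fun y => V (g y))). apply gC; auto.
  - intros x. simpl. rewrite H0. auto.
  - exists (g c). intros x. rewrite H1. auto.
Qed.

Definition cont_interval (X : Space) a b (g : R -> pt X) :=
  forall t, a <= t <= b -> forall O, opn X O -> O (g t) ->
  exists e, 0 < e /\ forall s, a <= s <= b -> Rabs (s - t) < e -> O (g s).

Definition cont_rect (X : Space) a b c d (L : R -> R -> pt X) :=
  forall x y, a <= x <= b -> c <= y <= d -> forall O, opn X O -> O (L x y) ->
  exists e, 0 < e /\ forall x' y', a <= x' <= b -> c <= y' <= d ->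
    Rabs (x' - x) < e -> Rabs (y' - y) < e -> O (L x' y').

Lemma cont_interval_const (X : Space) a b (x : pt X) : cont_interval X a b (fun _ => x).
Proof. intros t Ht O Oo Ot. exists 1. split; [lra|]. auto. Qed.

Lemma cont_rect_swap X a b c d L : cont_rect X a b c d L -> cont_rect X c d a b (fun y x => L x y).
Proof.
  intros H y x Hy Hx O Oo Ox. destruct (H x y Hx Hy O Oo Ox) as [e [He Hc]].
  exists e. split; auto.
Qed.

Lemma cont_rect_row X a b c d L y : cont_rect X a b c d L -> c <= y <= d ->
  cont_interval X a b (fun x => L x y).
Proof.
  intros H Hy t Ht O Oo Ot. destruct (H t y Ht Hy O Oo Ot) as [e [He Hc]].
  exists e. split; auto. intros s Hs Hst. apply Hc; auto. rewrite Rminus_diag, Rabs_R0. auto.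
Qed.

Lemma cont_rect_col X a b c d L x : cont_rect X a b c d L -> a <= x <= b ->
  cont_interval X c d (fun y => L x y).
Proof. intros H Hx. apply (cont_rect_row X c d a b (fun y x => L x y) x); auto. apply cont_rect_swap; auto. Qed.

Lemma paste_h X x1 x2 x3 y1 y2 L1 L2 : x1 <= x2 -> x2 <= x3 ->
  cont_rect X x1 x2 y1 y2 L1 -> cont_rect X x2 x3 y1 y2 L2 ->
  (forall y, y1 <= y <= y2 -> L1 x2 y = L2 x2 y) ->
  cont_rect X x1 x3 y1 y2 (fun x y => if Rle_dec x x2 then L1 x y else L2 x y).
Proof.
  intros h12 h23 C1 C2 Heq x y Hx Hy O Oo Ox.
  destruct (Rtotal_order x x2) as [hl|[he|hg]].
  - destruct (Rle_dec x x2) as [_|n]; [|lra].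
    destruct (C1 x y ltac:(lra) Hy O Oo Ox) as [e [He Hc]].
    exists (Rmin e (x2 - x)). split; [apply Rmin_glb_lt; lra|].
    intros x' y' Hx' Hy' Ax Ay. pose proof (Rmin_l e (x2 - x)). pose proof (Rmin_r e (x2 - x)).
    apply Rabs_def2 in Ax.
    destruct (Rle_dec x' x2); [|lra]. apply Hc; auto; try lra. apply abs_lt_of; lra.
  - subst x. destruct (Rle_dec x2 x2) as [_|n]; [|lra].
    destruct (C1 x2 y ltac:(lra) Hy O Oo Ox) as [e1 [He1 Hc1]].
    rewrite Heq in Ox by auto.
    destruct (C2 x2 y ltac:(lra) Hy O Oo Ox) as [e2 [He2 Hc2]].
    exists (Rmin e1 e2). split; [apply Rmin_glb_lt; lra|].
    intros x' y' Hx' Hy' Ax Ay. pose proof (Rmin_l e1 e2). pose proof (Rmin_r e1 e2).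
    apply Rabs_def2 in Ax. apply Rabs_def2 in Ay.
    destruct (Rle_dec x' x2); [apply Hc1|apply Hc2]; auto; try lra; apply abs_lt_of; lra.
  - destruct (Rle_dec x x2) as [n|_]; [lra|].
    destruct (C2 x y ltac:(lra) Hy O Oo Ox) as [e [He Hc]].
    exists (Rmin e (x - x2)). split; [apply Rmin_glb_lt; lra|].
    intros x' y' Hx' Hy' Ax Ay. pose proof (Rmin_l e (x - x2)). pose proof (Rmin_r e (x - x2)).
    apply Rabs_def2 in Ax.
    destruct (Rle_dec x' x2); [lra|]. apply Hc; auto; try lra. apply abs_lt_of; lra.
Qed.

Lemma paste_v X x1 x2 y1 y2 y3 L1 L2 : y1 <= y2 -> y2 <= y3 ->
  cont_rect X x1 x2 y1 y2 L1 -> cont_rect X x1 x2 y2 y3 L2 ->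
  (forall x, x1 <= x <= x2 -> L1 x y2 = L2 x y2) ->
  cont_rect X x1 x2 y1 y3 (fun x y => if Rle_dec y y2 then L1 x y else L2 x y).
Proof.
  intros h12 h23 C1 C2 Heq.
  apply (cont_rect_swap X y1 y3 x1 x2 (fun y x => if Rle_dec y y2 then L1 x y else L2 x y)).
  apply paste_h; auto; apply cont_rect_swap; auto.
Qed.

Lemma homotopy_polar_cont (B : Space) (H : S_pt * I_pt -> pt B) :
  continuous (prod_space S_space I_space) B H ->
  forall a b c d, cont_rect B a b c d (fun th t => H (cis th, clampI t)).
Proof.
  intros Hc a b c d x y Hx Hy O Oo Ox.
  destruct (Hc O Oo (cis x, clampI y) Ox) as [U1 [V1 [U1o [V1o [U1x [V1y Hbox]]]]]].
  simpl in U1o, V1o, U1x, V1y.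
  destruct (U1o _ U1x) as [e1 [He1 HU]]. destruct (V1o _ V1y) as [e2 [He2 HV]].
  exists (Rmin (e1/2) e2). split; [apply Rmin_glb_lt; lra|].
  intros x' y' _ _ Ax Ay. pose proof (Rmin_l (e1/2) e2). pose proof (Rmin_r (e1/2) e2).
  apply (Hbox (cis x') (clampI y')).
  - apply HU. pose proof (S_dist_cis x x'). rewrite Rabs_minus_sym in Ax. lra.
  - apply HV. simpl. pose proof (clampR_lip y' y). lra.
Qed.

Lemma Ipath_cont (X : Space) (g : I_pt -> pt X) : continuous I_space X g ->
  forall r O, opn X O -> O (g (clampI r)) ->
  exists e, 0 < e /\ forall r', Rabs (r' - r) < e -> O (g (clampI r')).
Proof.
  intros Hg r O Oo Or. destruct (Hg O Oo (clampI r) Or) as [e [He Hc]].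
  exists e. split; auto. intros r' Hr. apply Hc. simpl.
  pose proof (clampR_lip r' r). lra.
Qed.

Section Lifting.
Variables (E B : Stream) (rho : pt (U E) -> pt (U B)).
Hypothesis Hcov : stream_covering E B rho.
Hypothesis HE : is_stream E.

Definition sheet (W : set (pt (U E))) (V : set (pt (U B))) :=
  opn (U E) W /\ stream_iso_onto rho W V.

Lemma cov_at b : exists V (Fm : set (set (pt (U E)))),
  V b /\ opn (U B) V /\ (forall W, Fm W -> sheet W V) /\
  (forall W W', Fm W -> Fm W' -> W <> W' -> forall x, W x -> W' x -> False) /\
  (forall x, V (rho x) <-> union_fam Fm x).
Proof.
  destruct Hcov as [_ [_ [Vs [Hcv HVs]]]].
  destruct (Hcv b) as [V [HV Vb]]. destruct (HVs V HV) as [Vo [Fm [HF [Hd Hu]]]].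
  exists V, Fm. split; [auto|]. split; [auto|]. split; [exact HF|]. split; auto.
Qed.

Lemma sheet_image W V : homeo_onto rho W V -> image rho W = V.
Proof.
  intros [H1 [_ [H3 _]]]. apply set_ext. intros b. split.
  - intros [x [Wx <-]]. apply H1; auto.
  - intros Vb. destruct (H3 b Vb) as [x [Wx Hx]]. exists x; auto.
Qed.

Lemma sheet_base_open W V : sheet W V -> opn (U B) V.
Proof.
  intros [Wo [Hh _]]. rewrite <- (sheet_image W V Hh). destruct Hh as [_ [_ [_ [_ H5]]]]. auto.
Qed.

(* Uniqueness of lifts: for two continuous paths over the same path in B, the
   set of times where they agree is open and closed, so they agree on the
   whole interval as soon as they agree at one time. *)
Lemma lift_agree_iff a b g1 g2 : cont_interval (U E) a b g1 -> cont_interval (U E) a b g2 ->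
  (forall t, a <= t <= b -> rho (g1 t) = rho (g2 t)) ->
  forall u v, a <= u -> u <= v -> v <= b -> (g1 u = g2 u <-> g1 v = g2 v).
Proof.
  intros H1 H2 Hr u v Hau Huv Hvb.
  apply (cousin_interval (fun u v => g1 u = g2 u <-> g1 v = g2 v) u v Huv).
  2:{ intros p q r _ _ _ _ Hp Hq. tauto. }
  intros t Ht.
  destruct (cov_at (rho (g1 t))) as [V [Fm [Vb [Vo [Hsh [Hdis Hun]]]]]].
  destruct (proj1 (Hun (g1 t)) Vb) as [W1 [F1 W1t]].
  assert (V2 : V (rho (g2 t))) by (rewrite <- Hr by lra; auto).
  destruct (proj1 (Hun (g2 t)) V2) as [W2 [F2 W2t]].
  destruct (Hsh W1 F1) as [W1o [[_ [Hinj1 _]] _]].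
  destruct (Hsh W2 F2) as [W2o _].
  destruct (H1 t ltac:(lra) W1 W1o W1t) as [e1 [He1 C1]].
  destruct (H2 t ltac:(lra) W2 W2o W2t) as [e2 [He2 C2]].
  exists (Rmin e1 e2). split; [apply Rmin_glb_lt; auto|].
  intros p q Hp Hpt Htq Hq Hw.
  pose proof (Rmin_l e1 e2). pose proof (Rmin_r e1 e2).
  assert (A1 : W1 (g1 p) /\ W1 (g1 q)) by (split; apply C1; try lra; apply abs_lt_of; lra).
  assert (A2 : W2 (g2 p) /\ W2 (g2 q)) by (split; apply C2; try lra; apply abs_lt_of; lra).
  destruct (classic (W1 = W2)) as [Heq|Hne].
  - (* both paths stay in one sheet, where rho is injective *)
    subst W2. split; intros _; apply Hinj1; try tauto; apply Hr; lra.
  - (* the paths stay in disjoint sheets, so they agree nowhere near t *)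
    split; intros He; exfalso.
    + apply (Hdis W1 W2 F1 F2 Hne (g1 p)); try tauto. rewrite He; tauto.
    + apply (Hdis W1 W2 F1 F2 Hne (g1 q)); try tauto. rewrite He; tauto.
Qed.

Lemma lift_unique a b g1 g2 : cont_interval (U E) a b g1 -> cont_interval (U E) a b g2 ->
  (forall t, a <= t <= b -> rho (g1 t) = rho (g2 t)) ->
  forall t0, a <= t0 <= b -> g1 t0 = g2 t0 -> forall t, a <= t <= b -> g1 t = g2 t.
Proof.
  intros H1 H2 Hr t0 Ht0 He t Ht.
  destruct (Rle_or_lt t0 t).
  - apply (lift_agree_iff a b g1 g2 H1 H2 Hr t0 t); auto; lra.
  - apply (lift_agree_iff a b g1 g2 H1 H2 Hr t t0); auto; lra.
Qed.

Lemma lift_of_constant a b g x : cont_interval (U E) a b g ->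
  (forall t, a <= t <= b -> rho (g t) = rho x) -> a <= b -> g a = x ->
  forall t, a <= t <= b -> g t = x.
Proof.
  intros Hg Hr Hab Ha. apply (lift_unique a b g (fun _ => x) Hg (cont_interval_const _ a b x) Hr a); auto; lra.
Qed.

Variable inh : inhabited (pt (U E)).

Definition sec (W : set (pt (U E))) (b : pt (U B)) : pt (U E) :=
  epsilon inh (fun x => W x /\ rho x = b).

Lemma sec_spec W V b : homeo_onto rho W V -> V b -> W (sec W b) /\ rho (sec W b) = b.
Proof. intros [_ [_ [Hs _]]] Vb. unfold sec. apply epsilon_spec. apply Hs; auto. Qed.

Lemma sec_eq W V x : homeo_onto rho W V -> W x -> sec W (rho x) = x.
Proof.
  intros Hh Wx. pose proof Hh as [H1 [H2 _]].
  destruct (sec_spec W V (rho x) Hh (H1 x Wx)). apply H2; auto.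
Qed.

Lemma sec_open W V : sheet W V ->
  forall O, opn (U E) O -> forall b, V b -> O (sec W b) ->
  exists O', opn (U B) O' /\ O' b /\ forall b', O' b' -> O (sec W b').
Proof.
  intros [Wo [Hh _]] O Oo b Vb Ob.
  exists (image rho (fun x => W x /\ O x)). split; [|split].
  - destruct Hh as [_ [_ [_ [_ H5]]]]. apply H5; [|tauto]. apply (proj1 HE); auto.
  - exists (sec W b). destruct (sec_spec W V b Hh Vb). tauto.
  - intros b' [x [[Wx Ox] <-]]. rewrite (sec_eq W V x Hh Wx). auto.
Qed.

Definition liftable (F : R -> R -> pt (U B)) x1 x2 y1 y2 :=
  forall e, rho e = F x1 y2 -> exists L, cont_rect (U E) x1 x2 y1 y2 L /\
     (forall x y, x1 <= x <= x2 -> y1 <= y <= y2 -> rho (L x y) = F x y) /\ L x1 y2 = e.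

(* Small rectangles are mapped into an evenly covered set, and lift through
   the local inverse of the sheet containing the prescribed corner point. *)
Lemma liftable_small a b c d F : cont_rect (U B) a b c d F ->
  forall x y, a <= x <= b -> c <= y <= d -> exists e, 0 < e /\ forall x1 x2 y1 y2,
    a <= x1 -> x1 <= x -> x <= x2 -> x2 <= b -> c <= y1 -> y1 <= y -> y <= y2 -> y2 <= d ->
    x2 - x1 < e -> y2 - y1 < e -> liftable F x1 x2 y1 y2.
Proof.
  intros HF x y Hx Hy.
  destruct (cov_at (F x y)) as [V [Fm [Vb [Vo [Hsh [_ Hun]]]]]].
  destruct (HF x y Hx Hy V Vo Vb) as [e [He HV]].
  exists e. split; auto.
  intros x1 x2 y1 y2 ? ? ? ? ? ? ? ? Wx Wy e0 He0.
  assert (HVin : forall x' y', x1 <= x' <= x2 -> y1 <= y' <= y2 -> V (F x' y')).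
  { intros x' y' ? ?. apply HV; try lra; apply abs_lt_of; lra. }
  assert (Ve0 : V (rho e0)) by (rewrite He0; apply HVin; lra).
  destruct (proj1 (Hun e0) Ve0) as [W [FW We0]].
  pose proof (Hsh W FW) as HWV. destruct HWV as [Wo [Hh _]].
  exists (fun x y => sec W (F x y)). split; [|split].
  - intros x' y' Hx' Hy' O Oo Ox.
    destruct (sec_open W V (Hsh W FW) O Oo (F x' y') (HVin x' y' Hx' Hy') Ox) as [O' [O'o [O'b HO']]].
    destruct (HF x' y' ltac:(lra) ltac:(lra) O' O'o O'b) as [e' [He' Hc']].
    exists e'. split; auto. intros. apply HO'. apply Hc'; auto; lra.
  - intros x' y' Hx' Hy'. apply (sec_spec W V); auto.
  - rewrite <- He0. apply (sec_eq W V); auto.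
Qed.

(* Lifts on two horizontally adjacent rectangles can be chosen to agree on the
   common edge (by uniqueness of path lifts), and then paste. *)
Lemma liftable_hcat F x1 x2 x3 y1 y2 : x1 <= x2 -> x2 <= x3 -> y1 <= y2 ->
  liftable F x1 x2 y1 y2 -> liftable F x2 x3 y1 y2 -> liftable F x1 x3 y1 y2.
Proof.
  intros ? ? ? G1 G2 e0 He0.
  destruct (G1 e0 He0) as [L1 [C1 [R1 E1]]].
  destruct (G2 (L1 x2 y2)) as [L2 [C2 [R2 E2]]]; [apply R1; lra|].
  assert (Hedge : forall y, y1 <= y <= y2 -> L1 x2 y = L2 x2 y).
  { apply (lift_unique y1 y2 (fun y => L1 x2 y) (fun y => L2 x2 y)) with (t0 := y2); auto; try lra.
    - apply (cont_rect_col _ x1 x2); auto; lra.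
    - apply (cont_rect_col _ x2 x3); auto; lra.
    - intros t Ht. rewrite R1, R2; auto; lra. }
  exists (fun x y => if Rle_dec x x2 then L1 x y else L2 x y). split; [|split].
  - apply paste_h; auto.
  - intros x y Hx Hy. destruct (Rle_dec x x2); [apply R1|apply R2]; auto; lra.
  - destruct (Rle_dec x1 x2); [auto|lra].
Qed.

Lemma liftable_vcat F x1 x2 y1 y2 y3 : x1 <= x2 -> y1 <= y2 -> y2 <= y3 ->
  liftable F x1 x2 y1 y2 -> liftable F x1 x2 y2 y3 -> liftable F x1 x2 y1 y3.
Proof.
  intros ? ? ? G1 G2 e0 He0.
  destruct (G2 e0 He0) as [Lu [Cu [Ru Eu]]].
  destruct (G1 (Lu x1 y2)) as [Ll [Cl [Rl El]]]; [apply Ru; lra|].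
  assert (Hedge : forall x, x1 <= x <= x2 -> Ll x y2 = Lu x y2).
  { apply (lift_unique x1 x2 (fun x => Ll x y2) (fun x => Lu x y2)) with (t0 := x1); auto; try lra.
    - apply (cont_rect_row _ x1 x2 y1 y2); auto; lra.
    - apply (cont_rect_row _ x1 x2 y2 y3); auto; lra.
    - intros t Ht. rewrite Rl, Ru; auto; lra. }
  exists (fun x y => if Rle_dec y y2 then Ll x y else Lu x y). split; [|split].
  - apply paste_v; auto.
  - intros x y Hx Hy. destruct (Rle_dec y y2); [apply Rl|apply Ru]; auto; lra.
  - destruct (Rle_dec y3 y2); auto.
    assert (y3 = y2) by lra. subst y3. rewrite El. exact Eu.
Qed.

Lemma homotopy_lifting a b c d F : a <= b -> c <= d ->
  cont_rect (U B) a b c d F -> liftable F a b c d.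
Proof.
  intros Hab Hcd HF. apply cousin_rectangle; auto.
  - apply liftable_small; auto.
  - intros. apply liftable_hcat with x2; auto.
  - intros. apply liftable_vcat with y2; auto.
Qed.

End Lifting.

Section AntisymmetryToConstantLoops.
Variables (E B : Stream) (rho : pt (U E) -> pt (U B)).
Hypothesis Hcov : stream_covering E B rho.
Hypothesis HE : is_stream E.

(* A continuous lift of a directed loop f(e^{i.}) is increasing for <=_E:
   near each time the lift stays in one sheet, where rho reflects the
   circulation, and the local comparisons chain by Cousin's lemma. *)
Lemma lift_of_dimap_increasing (f : pt (U dS) -> pt (U B)) : stream_map dS B f ->
  forall a b (l : R -> pt (U E)), cont_interval (U E) a b l ->
  (forall th, a <= th <= b -> rho (l th) = f (cis th)) ->
  forall u v, a <= u -> u <= v -> v <= b -> circ E full (l u) (l v).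
Proof.
  intros [_ Hf] a b l Hl Hrl u v Hau Huv Hvb.
  destruct HE as [HtE HcE].
  assert (Fo : opn (U E) full) by apply HtE.
  apply (cousin_interval (fun u v => circ E full (l u) (l v)) u v Huv).
  2:{ intros p q r _ _ _ _ ? ?. apply circ_trans with (l q); auto. }
  intros t Ht.
  destruct (cov_at E B rho Hcov (rho (l t))) as [V [Fm [Vb [Vo [Hsh [_ Hun]]]]]].
  destruct (proj1 (Hun (l t)) Vb) as [W [FW Wt]].
  destruct (Hsh W FW) as [Wo [Hh [_ Hreflect]]].
  destruct (Hl t ltac:(lra) W Wo Wt) as [e [He Hc1]].
  exists e. split; auto.
  intros p q ? ? ? ? ?.
  assert (HW : forall s, p <= s <= q -> W (l s)).
  { intros s Hs. apply Hc1; [lra|]. apply abs_lt_of; lra. }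
  assert (Hcb : circ B (image rho W) (rho (l p)) (rho (l q))).
  { rewrite (sheet_image E B rho W V Hh), !Hrl by lra. apply Hf; auto. simpl.
    exists p, q. repeat split; auto; [lra|].
    intros s Hs. rewrite <- Hrl by lra. apply (proj1 Hh). apply HW; auto. }
  apply (circ_mono E HcE W full (l p) (l q) Wo Fo (fun z _ => I)).
  apply (Hreflect W Wo (fun z h => h)); auto; apply HW; lra.
Qed.

(* A null-homotopic loop in B lifts to a closed path in E: lift the homotopy
   on [0,2pi] x [0,1] from a point over the constant end; the end stays at that
   point and both sides lift the same path, so the bottom edge closes up. *)
Lemma null_homotopic_loop_lift (f : S_pt -> pt (U B)) : null_homotopic S_space (U B) f ->
  exists l, cont_interval (U E) 0 (2 * PI) l /\
    (forall th, 0 <= th <= 2 * PI -> rho (l th) = f (cis th)) /\ l 0 = l (2 * PI).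
Proof.
  intros [H [Hcont [H0 [c H1]]]]. pose proof PI_gt3.
  destruct Hcov as [_ [Hsurj _]]. destruct (Hsurj c) as [e0 He0].
  set (F := fun th t => H (cis th, clampI t)).
  assert (HF : cont_rect (U B) 0 (2 * PI) 0 1 F) by (apply homotopy_polar_cont; auto).
  destruct (homotopy_lifting E B rho Hcov HE (inhabits e0) 0 (2 * PI) 0 1 F ltac:(lra) ltac:(lra) HF e0)
    as [L [CL [RL EL]]].
  { unfold F. rewrite clampI_1, H1. auto. }
  assert (Htop : L (2 * PI) 1 = e0).
  { apply (lift_of_constant E B rho Hcov 0 (2 * PI) (fun x => L x 1)); auto; try lra.
    - apply cont_rect_row with 0 1; auto; lra.
    - intros t Ht. rewrite RL by lra. unfold F. rewrite clampI_1, H1. auto. }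
  assert (Hside : L 0 0 = L (2 * PI) 0).
  { apply (lift_unique E B rho Hcov 0 1 (fun t => L 0 t) (fun t => L (2 * PI) t)) with (t0 := 1);
      try lra.
    - apply cont_rect_col with 0 (2 * PI); auto; lra.
    - apply cont_rect_col with 0 (2 * PI); auto; lra.
    - intros t Ht. rewrite !RL by lra. unfold F. rewrite cis_2PI. auto.
    - rewrite EL, Htop. auto. }
  exists (fun th => L th 0). split; [|split]; auto.
  - apply cont_rect_row with 0 1; auto; lra.
  - intros th Hth. rewrite RL by lra. unfold F. rewrite clampI_0, H0. auto.
Qed.

(* (1) -> (2): if <=_E is antisymmetric, null-homotopic directed loops in B
   are constant, since their closed lifts are increasing. *)
Lemma antisymmetric_constant_loops :
  (forall x y, circ E full x y -> circ E full y x -> x = y) ->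
  forall f : pt (U dS) -> pt (U B), stream_map dS B f -> null_homotopic (U dS) (U B) f ->
  forall z z', f z = f z'.
Proof.
  intros Hanti f Hf Hnull. pose proof PI_gt3.
  destruct (null_homotopic_loop_lift f Hnull) as [l [Hl [Hrl Hclosed]]].
  assert (Hinc := lift_of_dimap_increasing f Hf 0 (2 * PI) l Hl Hrl).
  assert (Hconst : forall th, 0 <= th <= 2 * PI -> f (cis th) = rho (l 0)).
  { intros th Hth. rewrite <- Hrl by auto. f_equal. apply Hanti.
    - rewrite Hclosed. apply Hinc; lra.
    - apply Hinc; lra. }
  intros z z'. destruct (angle_exists z) as [t [Ht ->]]. destruct (angle_exists z') as [t' [Ht' ->]].
  rewrite !Hconst; auto.
Qed.

End AntisymmetryToConstantLoops.

Lemma dipath_sub (X : Stream) g O u v : dipath X g -> opn (U X) O -> 0 <= u -> u <= v -> v <= 1 ->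
  (forall w, u <= w <= v -> O (g (clampI w))) -> circ X O (g (clampI u)) (g (clampI v)).
Proof.
  intros [_ Hg] Oo Hu Huv Hv Hw. apply Hg; auto. simpl.
  rewrite !clampR_id by lra. split; auto.
  intros z Hz. rewrite <- (clampI_id z). apply Hw. lra.
Qed.

Lemma const_dipath (X : Stream) c : is_circulation X -> dipath X (fun _ => c).
Proof.
  intros HX. split.
  - intros O Oo x Ox. exists 1. split; [lra|]. auto.
  - intros O Oo a b [Hab Hin]. apply circ_refl; auto. apply (Hin a). lra.
Qed.

Definition catp {X : Type} (g1 g2 : I_pt -> X) (s : I_pt) : X :=
  if Rle_dec (proj1_sig s) (1/2) then g1 (clampI (2 * proj1_sig s))
  else g2 (clampI (2 * proj1_sig s - 1)).

Lemma catp_l {X : Type} (g1 g2 : I_pt -> X) w : 0 <= w <= 1/2 ->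
  catp g1 g2 (clampI w) = g1 (clampI (2 * w)).
Proof. intros. unfold catp. rewrite clampI_val by lra. destruct Rle_dec; auto; lra. Qed.

Lemma catp_r {X : Type} (g1 g2 : I_pt -> X) w : g1 I1 = g2 I0 -> 1/2 <= w <= 1 ->
  catp g1 g2 (clampI w) = g2 (clampI (2 * w - 1)).
Proof.
  intros He Hw. unfold catp. rewrite clampI_val by lra. destruct Rle_dec; auto.
  replace w with (1/2) by lra. replace (2 * (1/2) - 1) with 0 by lra. replace (2 * (1/2)) with 1 by lra.
  rewrite clampI_0, clampI_1. auto.
Qed.

Lemma catp_continuous (X : Space) g1 g2 : continuous I_space X g1 -> continuous I_space X g2 ->
  g1 I1 = g2 I0 -> continuous I_space X (catp g1 g2).
Proof.
  intros C1 C2 He O Oo s Os. destruct s as [r hr]. simpl.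
  assert (Hs : exist (fun x => 0 <= x <= 1) r hr = clampI r) by (apply I_eq; simpl; rewrite clampR_id; auto).
  rewrite Hs in Os.
  assert (Hy : forall y : I_pt, catp g1 g2 y = catp g1 g2 (clampI (proj1_sig y)) /\ 0 <= proj1_sig y <= 1).
  { intros y. rewrite clampI_id. split; auto. destruct y; auto. }
  destruct (Rtotal_order r (1/2)) as [hl|[he|hg]].
  - rewrite catp_l in Os by lra.
    destruct (Ipath_cont _ g1 C1 (2 * r) O Oo Os) as [e1 [He1 Hc1]].
    exists (Rmin (e1/2) (1/2 - r)). split; [apply Rmin_glb_lt; lra|].
    intros y Hyr. pose proof (Rmin_l (e1/2) (1/2 - r)). pose proof (Rmin_r (e1/2) (1/2 - r)).
    destruct (Hy y) as [-> Hy1]. apply Rabs_def2 in Hyr.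
    rewrite catp_l by lra. apply Hc1. apply abs_lt_of; lra.
  - subst r. pose proof Os as Os2. rewrite catp_l in Os by lra. rewrite catp_r in Os2 by (auto; lra).
    destruct (Ipath_cont _ g1 C1 _ O Oo Os) as [e1 [He1 Hc1]].
    destruct (Ipath_cont _ g2 C2 _ O Oo Os2) as [e2 [He2 Hc2]].
    exists (Rmin (e1/2) (e2/2)). split; [apply Rmin_glb_lt; lra|].
    intros y Hyr. pose proof (Rmin_l (e1/2) (e2/2)). pose proof (Rmin_r (e1/2) (e2/2)).
    destruct (Hy y) as [-> Hy1]. apply Rabs_def2 in Hyr.
    destruct (Rle_or_lt (proj1_sig y) (1/2)).
    + rewrite catp_l by lra. apply Hc1. apply abs_lt_of; lra.
    + rewrite catp_r by (auto; lra). apply Hc2. apply abs_lt_of; lra.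
  - rewrite catp_r in Os by (auto; lra).
    destruct (Ipath_cont _ g2 C2 _ O Oo Os) as [e2 [He2 Hc2]].
    exists (Rmin (e2/2) (r - 1/2)). split; [apply Rmin_glb_lt; lra|].
    intros y Hyr. pose proof (Rmin_l (e2/2) (r - 1/2)). pose proof (Rmin_r (e2/2) (r - 1/2)).
    destruct (Hy y) as [-> Hy1]. apply Rabs_def2 in Hyr.
    rewrite catp_r by (auto; lra). apply Hc2. apply abs_lt_of; lra.
Qed.

(* The concatenation of two composable dipaths is a dipath: a subinterval is
   either inside one half, or split at 1/2 and handled by transitivity. *)
Lemma catp_dipath (X : Stream) g1 g2 : is_circulation X -> dipath X g1 -> dipath X g2 ->
  g1 I1 = g2 I0 -> dipath X (catp g1 g2).
Proof.
  intros HX H1 H2 He. split; [apply catp_continuous; [apply H1|apply H2|auto]|].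
  intros O Oo a b Hab.
  set (c := catp g1 g2).
  assert (Hleft : forall u v, 0 <= u -> u <= v -> v <= 1/2 ->
            (forall w, u <= w <= v -> O (c (clampI w))) -> circ X O (c (clampI u)) (c (clampI v))).
  { intros p q ? ? ? Hq. unfold c. rewrite !catp_l by lra. apply dipath_sub; auto; try lra.
    intros w Hw. replace w with (2 * (w/2)) by lra. rewrite <- (catp_l g1 g2) by lra. apply Hq. lra. }
  assert (Hright : forall u v, 1/2 <= u -> u <= v -> v <= 1 ->
            (forall w, u <= w <= v -> O (c (clampI w))) -> circ X O (c (clampI u)) (c (clampI v))).
  { intros p q ? ? ? Hq. unfold c. rewrite !catp_r by (auto; lra). apply dipath_sub; auto; try lra.
    intros w Hw. replace w with (2 * ((w + 1)/2) - 1) by lra.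
    rewrite <- (catp_r g1 g2) by (auto; lra). apply Hq. lra. }
  destruct Hab as [Hab Hin]. rewrite <- (clampI_id a), <- (clampI_id b).
  destruct a as [u hu], b as [v hv]. simpl in *.
  assert (Hw : forall w, u <= w <= v -> O (c (clampI w))).
  { intros w Hw. apply Hin. simpl. rewrite clampR_id; lra. }
  destruct (Rle_or_lt v (1/2)); [apply Hleft; auto; lra|].
  destruct (Rle_or_lt (1/2) u); [apply Hright; auto; lra|].
  apply circ_trans with (c (clampI (1/2))); auto.
  - apply Hleft; try lra. intros; apply Hw; lra.
  - apply Hright; try lra. intros; apply Hw; lra.
Qed.

Definition dijoined (X : Stream) (x y : pt (U X)) : Prop :=
  exists g, dipath X g /\ g I0 = x /\ g I1 = y.

Lemma dijoined_preorder (X : Stream) : is_circulation X -> preorder_on full (dijoined X).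
Proof.
  intros HX. split; [|split].
  - intros; split; exact I.
  - intros z _. exists (fun _ => z). split; auto. apply const_dipath; auto.
  - intros a b c [g1 [H1 [H1a H1b]]] [g2 [H2 [H2a H2b]]].
    exists (catp g1 g2). split; [apply catp_dipath; auto; congruence|]. split.
    + rewrite <- clampI_0, catp_l by lra. replace (2 * 0) with 0 by lra. rewrite clampI_0. auto.
    + rewrite <- clampI_1, catp_r by (auto; try congruence; lra). replace (2 * 1 - 1) with 1 by lra.
      rewrite clampI_1. auto.
Qed.

Section DipathsInTheCover.
Variables (E B : Stream) (rho : pt (U E) -> pt (U B)).
Hypothesis Hcov : stream_covering E B rho.
Hypothesis HE : is_stream E.

Lemma sheet_lift_dipath inh W V g : sheet E B rho W V -> dipath B g -> (forall t, V (g t)) ->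
  dipath E (fun t => sec E B rho inh W (g t)).
Proof.
  intros Hsh [Hgc Hgs] HV. pose proof Hsh as [Wo [Hh [_ Hreflect]]]. split.
  - intros O Oo t Ot.
    destruct (sec_open E B rho HE inh W V Hsh O Oo (g t) (HV t) Ot) as [O' [O'o [O't HO']]].
    destruct (Hgc O' O'o t O't) as [e [He Hc]]. exists e. split; auto.
  - intros O Oo a b Hab.
    assert (HWO : opn (U E) (fun x => W x /\ O x)) by (apply (proj1 HE); auto).
    set (O' := image rho (fun x => W x /\ O x)).
    assert (Hset : (fun z : pt (U dI) => O (sec E B rho inh W (g z))) = (fun z => O' (g z))).
    { apply set_ext. intros z. split.
      - intros Oz. exists (sec E B rho inh W (g z)). destruct (sec_spec E B rho inh W V (g z) Hh (HV z)). tauto.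
      - intros [x [[Wx Ox] Hx]]. rewrite <- Hx, (sec_eq E B rho inh W V x Hh Wx). auto. }
    change (circ dI (fun z : pt (U dI) => O (sec E B rho inh W (g z))) a b) in Hab. rewrite Hset in Hab.
    assert (Hio : opn (U B) O') by (destruct Hh as [_ [_ [_ [_ H5]]]]; apply H5; auto; tauto).
    apply Hgs in Hab; auto.
    destruct (sec_spec E B rho inh W V (g a) Hh (HV a)) as [Wa Ra].
    destruct (sec_spec E B rho inh W V (g b) Hh (HV b)) as [Wb Rb].
    rewrite <- Ra, <- Rb in Hab.
    apply (circ_mono E (proj2 HE) (fun x => W x /\ O x) O); auto; [tauto|].
    apply Hreflect; auto. tauto.
Qed.

(* Within a sheet, comparable points are joined by a dipath, because their
   images are joined by a dipath in the path-ordered base. *)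
Lemma sheet_circ_dijoined W V a b : path_ordered B -> sheet E B rho W V ->
  circ E W a b -> dijoined E a b.
Proof.
  intros Hpo Hsh Hab. pose proof Hsh as [Wo [Hh [Hpush _]]].
  destruct (circ_dom E (proj2 HE) W a b Wo Hab) as [Wa Wb].
  assert (HB : circ B V (rho a) (rho b)).
  { apply Hpush; [apply (sheet_base_open E B rho W V Hsh)|auto|].
    assert (Hs : (fun z => W z /\ V (rho z)) = W).
    { apply set_ext. intros z. split; [tauto|]. intros Wz. split; auto. apply (proj1 Hh); auto. }
    rewrite Hs. auto. }
  destruct (Hpo V (sheet_base_open E B rho W V Hsh) (rho a) (rho b) HB) as [g [Hg [Hg0 [Hg1 HgV]]]].
  exists (fun t => sec E B rho (inhabits a) W (g t)). split; [apply sheet_lift_dipath with V; auto|].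
  split; [rewrite Hg0|rewrite Hg1]; apply (sec_eq E B rho (inhabits a) W V); auto.
Qed.

(* If B is path-ordered, so is the order <=_E: since E is the union of the
   sheets, <=_E is the smallest preorder containing the circulations of the
   sheets, and dijoined is such a preorder. *)
Lemma circ_full_dijoined : path_ordered B ->
  forall x y, circ E full x y -> dijoined E x y.
Proof.
  intros Hpo.
  set (Fm := fun W => exists V, sheet E B rho W V).
  destruct (proj2 (proj2 HE) Fm) as [_ [_ Hmin]]; [intros W [V [Wo _]]; auto|].
  assert (Hfull : union_fam Fm = full).
  { apply set_ext. intros e. split; [intros; exact I|]. intros _.
    destruct (cov_at E B rho Hcov (rho e)) as [V [F' [Vb [_ [Hsh [_ Hun]]]]]].
    destruct (proj1 (Hun e) Vb) as [W [FW We]]. exists W. split; auto. exists V. auto. }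
  intros x y Hxy. rewrite <- Hfull in Hxy. revert x y Hxy. apply Hmin.
  - rewrite Hfull. apply dijoined_preorder, (proj2 HE).
  - intros a b [W [[V Hsh] Hab]]. apply (sheet_circ_dijoined W V); auto.
Qed.

End DipathsInTheCover.

(* Gluing two paths into a loop: on the upper half circle, (x,y) |-> g1((1-x)/2)
   runs from 1 to -1; on the lower half, (x,y) |-> g2((1+x)/2) runs back.
   Directed anticlockwise, the loop follows g1 and then g2. *)
Definition glue_loop {X : Type} (g1 g2 : I_pt -> X) (z : S_pt) : X :=
  if Rle_dec 0 (snd (proj1_sig z)) then g1 (clampI ((1 - fst (proj1_sig z))/2))
  else g2 (clampI ((1 + fst (proj1_sig z))/2)).

Lemma glue_up {X : Type} (g1 g2 : I_pt -> X) z : 0 <= snd (proj1_sig z) ->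
  glue_loop g1 g2 z = g1 (clampI ((1 - fst (proj1_sig z))/2)).
Proof. intros. unfold glue_loop. destruct Rle_dec; auto; lra. Qed.

(* On the real axis both formulas agree, thanks to the matching endpoints. *)
Lemma glue_low {X : Type} (g1 g2 : I_pt -> X) z : g1 I0 = g2 I1 -> g1 I1 = g2 I0 ->
  snd (proj1_sig z) <= 0 -> glue_loop g1 g2 z = g2 (clampI ((1 + fst (proj1_sig z))/2)).
Proof.
  intros E0 E1 Hs. unfold glue_loop. destruct Rle_dec; auto.
  pose proof (S_unit z). assert (snd (proj1_sig z) = 0) by lra.
  assert (Hf : (fst (proj1_sig z) - 1) * (fst (proj1_sig z) + 1) = 0) by nra.
  apply Rmult_integral in Hf. destruct Hf as [Hf|Hf].
  - replace (fst (proj1_sig z)) with 1 by lra.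
    replace ((1 - 1)/2) with 0 by lra. replace ((1 + 1)/2) with 1 by lra. rewrite clampI_0, clampI_1. auto.
  - replace (fst (proj1_sig z)) with (-1) by lra.
    replace ((1 - -1)/2) with 1 by lra. replace ((1 + -1)/2) with 0 by lra. rewrite clampI_0, clampI_1. auto.
Qed.

Lemma glue_continuous (X : Space) (g1 g2 : I_pt -> pt X) :
  continuous I_space X g1 -> continuous I_space X g2 ->
  g1 I0 = g2 I1 -> g1 I1 = g2 I0 -> continuous S_space X (glue_loop g1 g2).
Proof.
  intros C1 C2 E0 E1 O Oo z Oz. simpl.
  set (x0 := fst (proj1_sig z)). set (y0 := snd (proj1_sig z)).
  assert (K1 : O (g1 (clampI ((1 - x0)/2))) -> exists e, 0 < e /\ forall w, S_dist z w < e ->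
             O (g1 (clampI ((1 - fst (proj1_sig w))/2)))).
  { intros Ho. destruct (Ipath_cont X g1 C1 _ O Oo Ho) as [e [He Hc]]. exists (2 * e). split; [lra|].
    intros w Hw. apply Hc. pose proof (fst_le_dist z w) as Hd. apply abs_le_b in Hd.
    apply abs_lt_of; unfold x0; lra. }
  assert (K2 : O (g2 (clampI ((1 + x0)/2))) -> exists e, 0 < e /\ forall w, S_dist z w < e ->
             O (g2 (clampI ((1 + fst (proj1_sig w))/2)))).
  { intros Ho. destruct (Ipath_cont X g2 C2 _ O Oo Ho) as [e [He Hc]]. exists (2 * e). split; [lra|].
    intros w Hw. apply Hc. pose proof (fst_le_dist z w) as Hd. apply abs_le_b in Hd.
    apply abs_lt_of; unfold x0; lra. }
  assert (Hsn : forall w, - S_dist z w <= snd (proj1_sig w) - y0 <= S_dist z w).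
  { intros w. apply abs_le_b. rewrite Rabs_minus_sym. apply snd_le_dist. }
  destruct (Rtotal_order y0 0) as [hl|[he|hg]].
  - rewrite glue_low in Oz by (auto; unfold y0 in hl; lra).
    destruct (K2 Oz) as [e [He Hc]]. exists (Rmin e (-y0)). split; [apply Rmin_glb_lt; lra|].
    intros w Hw. pose proof (Rmin_l e (-y0)). pose proof (Rmin_r e (-y0)). pose proof (Hsn w).
    rewrite glue_low by (auto; lra). apply Hc. lra.
  - pose proof Oz as Oz2. rewrite glue_up in Oz by (unfold y0 in he; lra).
    rewrite glue_low in Oz2 by (auto; unfold y0 in he; lra).
    destruct (K1 Oz) as [e1 [He1 Hc1]]. destruct (K2 Oz2) as [e2 [He2 Hc2]].
    exists (Rmin e1 e2). split; [apply Rmin_glb_lt; lra|].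
    intros w Hw. pose proof (Rmin_l e1 e2). pose proof (Rmin_r e1 e2).
    destruct (Rle_or_lt 0 (snd (proj1_sig w))).
    + rewrite glue_up by auto. apply Hc1. lra.
    + rewrite glue_low by (auto; lra). apply Hc2. lra.
  - rewrite glue_up in Oz by (unfold y0 in hg; lra).
    destruct (K1 Oz) as [e [He Hc]]. exists (Rmin e y0). split; [apply Rmin_glb_lt; lra|].
    intros w Hw. pose proof (Rmin_l e y0). pose proof (Rmin_r e y0). pose proof (Hsn w).
    rewrite glue_up by lra. apply Hc. lra.
Qed.

Definition signed_on u v :=
  (forall s, u <= s <= v -> 0 <= sin s) \/ (forall s, u <= s <= v -> sin s <= 0).

Lemma signed_on_sub u v u' v' : u <= u' -> v' <= v -> signed_on u v -> signed_on u' v'.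
Proof. intros ? ? [H|H]; [left|right]; intros s Hs; apply H; lra. Qed.

Lemma sin_locally_signed t : exists e, 0 < e <= 1 /\ signed_on (t - e) t /\ signed_on t (t + e).
Proof.
  pose proof PI_gt3.
  assert (Hnear : forall s, sin t - Rabs (s - t) <= sin s <= sin t + Rabs (s - t)).
  { intros s. pose proof (sin_lip s t) as Hl. apply abs_le_b in Hl. lra. }
  destruct (Rtotal_order (sin t) 0) as [hl|[he|hg]].
  - exists (Rmin 1 (- sin t)). pose proof (Rmin_l 1 (- sin t)). pose proof (Rmin_r 1 (- sin t)).
    assert (Hneg : forall s, Rabs (s - t) <= Rmin 1 (- sin t) -> sin s <= 0)
      by (intros s Hs; pose proof (Hnear s); lra).
    split; [split; [apply Rmin_glb_lt|]; lra|].
    split; right; intros s Hs; apply Hneg; apply Rabs_le; lra.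
  - (* t is a multiple of pi: sin s = cos t * sin (s - t) with cos t = 1 or -1 *)
    exists 1. split; [lra|].
    assert (Hsh : forall s, sin s = cos t * sin (s - t)).
    { intros s. replace s with (t + (s - t)) at 1 by lra. rewrite sin_plus, he. ring. }
    assert (Hr : forall s, t <= s <= t + 1 -> 0 <= sin (s - t)) by (intros; apply sin_ge_0; lra).
    assert (Hl : forall s, t - 1 <= s <= t -> sin (s - t) <= 0).
    { intros s Hs. replace (s - t) with (- (t - s)) by lra. rewrite sin_neg.
      assert (0 <= sin (t - s)) by (apply sin_ge_0; lra). lra. }
    pose proof (sin2_cos2 t) as Hsc. unfold Rsqr in Hsc. rewrite he in Hsc.
    assert (Hc : (cos t - 1) * (cos t + 1) = 0) by nra.
    apply Rmult_integral in Hc. destruct Hc as [Hc|Hc].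
    + assert (Hcos : cos t = 1) by lra. rewrite Hcos in Hsh.
      split; [right|left]; intros s Hs; rewrite Hsh; [specialize (Hl s Hs)|specialize (Hr s Hs)]; lra.
    + assert (Hcos : cos t = -1) by lra. rewrite Hcos in Hsh.
      split; [left|right]; intros s Hs; rewrite Hsh; [specialize (Hl s Hs)|specialize (Hr s Hs)]; lra.
  - exists (Rmin 1 (sin t)). pose proof (Rmin_l 1 (sin t)). pose proof (Rmin_r 1 (sin t)).
    assert (Hpos : forall s, Rabs (s - t) <= Rmin 1 (sin t) -> 0 <= sin s)
      by (intros s Hs; pose proof (Hnear s); lra).
    split; [split; [apply Rmin_glb_lt|]; lra|].
    split; left; intros s Hs; apply Hpos; apply Rabs_le; lra.
Qed.

(* On a short arc where sin keeps its sign, the glued loop is a monotone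
   reparametrisation of g1 (upper half) or of g2 (lower half), hence directed. *)
Lemma glue_arc (X : Stream) g1 g2 O u v : dipath X g1 -> dipath X g2 ->
  g1 I0 = g2 I1 -> g1 I1 = g2 I0 -> opn (U X) O -> u <= v -> v <= u + 1 -> signed_on u v ->
  (forall s, u <= s <= v -> O (glue_loop g1 g2 (cis s))) ->
  circ X O (glue_loop g1 g2 (cis u)) (glue_loop g1 g2 (cis v)).
Proof.
  intros Hg1 Hg2 E0 E1 Oo Huv Hv1 Hsign HO. pose proof PI_gt3.
  pose proof (COS_bound u). pose proof (COS_bound v).
  assert (Hhalf : 0 <= sin ((v - u)/2)) by (apply sin_ge_0; lra).
  destruct Hsign as [Hsin|Hsin].
  - (* upper half: cos decreases, and the parameter (1 - cos)/2 increases *)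
    assert (Hup : forall s, u <= s <= v -> glue_loop g1 g2 (cis s) = g1 (clampI ((1 - cos s)/2)))
      by (intros s Hs; apply glue_up; apply Hsin; auto).
    rewrite !Hup by lra.
    assert (Hcos : cos v <= cos u).
    { pose proof (form2 u v) as Hf. replace ((u - v)/2) with (- ((v - u)/2)) in Hf by lra.
      rewrite sin_neg in Hf. assert (0 <= sin ((u + v)/2)) by (apply Hsin; lra). nra. }
    apply dipath_sub; auto; try lra. intros w Hw.
    destruct (cos_ivt u v (1 - 2 * w)) as [r [Hr Hc]]; [lra|nra|].
    replace w with ((1 - cos r)/2) by lra. rewrite <- Hup by lra. apply HO; lra.
  - (* lower half: cos increases, and the parameter (1 + cos)/2 increases *)
    assert (Hlow : forall s, u <= s <= v -> glue_loop g1 g2 (cis s) = g2 (clampI ((1 + cos s)/2)))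
      by (intros s Hs; apply glue_low; auto; apply Hsin; auto).
    rewrite !Hlow by lra.
    assert (Hcos : cos u <= cos v).
    { pose proof (form2 v u) as Hf.
      assert (sin ((v + u)/2) <= 0) by (apply Hsin; lra). nra. }
    apply dipath_sub; auto; try lra. intros w Hw.
    destruct (cos_ivt u v (2 * w - 1)) as [r [Hr Hc]]; [lra|nra|].
    replace w with ((1 + cos r)/2) by lra. rewrite <- Hlow by lra. apply HO; lra.
Qed.

(* Two dipaths x ~> y and y ~> x glue to a stream map from the directed circle:
   an arc of the circle is covered by short arcs, each split at its centre
   into two arcs of constant sign of sin. *)
Lemma glue_stream_map (X : Stream) g1 g2 : is_circulation X -> dipath X g1 -> dipath X g2 ->
  g1 I0 = g2 I1 -> g1 I1 = g2 I0 -> stream_map dS X (glue_loop g1 g2).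
Proof.
  intros HX H1 H2 E0 E1. split; [apply glue_continuous; auto; [apply H1|apply H2]|].
  intros O Oo z z' [th [th' [Hth [-> [-> HO]]]]].
  set (c := fun s => glue_loop g1 g2 (cis s)).
  apply (cousin_interval (fun u v => circ X O (c u) (c v)) th th' Hth).
  2:{ intros p q r _ _ _ _ ? ?. apply circ_trans with (c q); auto. }
  intros t Ht. destruct (sin_locally_signed t) as [e [He [Hl Hr]]].
  exists e. split; [lra|]. intros p q ? ? ? ? ?.
  apply circ_trans with (c t); auto; apply glue_arc; auto; try lra;
    try (intros s Hs; apply HO; lra).
  - apply signed_on_sub with (t - e) t; auto; lra.
  - apply signed_on_sub with t (t + e); auto; lra.
Qed.

Lemma glue_upper_onto {X : Type} (g1 g2 : I_pt -> X) r : 0 <= r <= 1 ->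
  exists th, glue_loop g1 g2 (cis th) = g1 (clampI r).
Proof.
  intros Hr. pose proof PI_gt3.
  destruct (cos_ivt 0 PI (1 - 2 * r)) as [th [Hth Hc]]; [lra|rewrite cos_0, cos_PI; nra|].
  exists th. rewrite glue_up by (simpl; apply sin_ge_0; lra). simpl. do 2 f_equal. lra.
Qed.

(* (2) -> (1): comparable points x <=_E y <=_E x are joined by dipaths both
   ways; the glued directed loop is null-homotopic in the simply connected E,
   so its projection is constant by (2); then g1, a lift of a constant path
   starting at x, ends at x, i.e. y = x. *)
Lemma constant_loops_antisymmetric (E B : Stream) (rho : pt (U E) -> pt (U B)) :
  is_stream E -> universal_stream_covering E B rho -> path_ordered B ->
  (forall f : pt (U dS) -> pt (U B),
      stream_map dS B f -> null_homotopic (U dS) (U B) f -> forall z z', f z = f z') ->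
  forall x y, circ E full x y -> circ E full y x -> x = y.
Proof.
  intros HE [Hcov [_ [_ Hsc]]] Hpo Hconst x y Hxy Hyx.
  destruct (circ_full_dijoined E B rho Hcov HE Hpo x y Hxy) as [g1 [Hg1 [Hg1a Hg1b]]].
  destruct (circ_full_dijoined E B rho Hcov HE Hpo y x Hyx) as [g2 [Hg2 [Hg2a Hg2b]]].
  assert (E0 : g1 I0 = g2 I1) by congruence.
  assert (E1 : g1 I1 = g2 I0) by congruence.
  set (h := glue_loop g1 g2).
  assert (Hh : stream_map dS E h) by (apply glue_stream_map; auto; apply HE).
  assert (Hproj_const : forall z z', rho (h z) = rho (h z')).
  { apply Hconst.
    - apply stream_map_comp with E; auto. apply Hcov.
    - apply null_homotopic_comp; [apply Hsc, Hh|apply Hcov]. }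
  assert (Hh0 : h (cis 0) = x).
  { unfold h. rewrite glue_up by (simpl; rewrite sin_0; lra). simpl. rewrite cos_0.
    replace ((1 - 1)/2) with 0 by lra. rewrite clampI_0. auto. }
  assert (Hg1_const : forall r, 0 <= r <= 1 -> g1 (clampI r) = x).
  { apply (lift_of_constant E B rho Hcov 0 1 (fun r => g1 (clampI r))); try lra.
    - intros t Ht O Oo Ot. destruct (Ipath_cont _ g1 (proj1 Hg1) t O Oo Ot) as [e [He Hc]].
      exists e. split; auto.
    - intros r Hr. destruct (glue_upper_onto g1 g2 r Hr) as [th Hth].
      rewrite <- Hth, <- Hh0. apply Hproj_const.
    - rewrite clampI_0. auto. }
  rewrite <- Hg1b, <- clampI_1. symmetry. apply Hg1_const. lra.
Qed.

Theorem mainTheorem3 (E B : Stream) (rho : pt (U E) -> pt (U B)) :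
  is_stream E -> is_stream B ->
  universal_stream_covering E B rho ->
  path_ordered B ->
  ((forall x y, circ E full x y -> circ E full y x -> x = y)
   <->
   (forall f : pt (U dS) -> pt (U B),
      stream_map dS B f -> null_homotopic (U dS) (U B) f ->
      forall z z', f z = f z')).
Proof.
  intros HE _ Hu Hpo. split.
  - apply (antisymmetric_constant_loops E B rho); [apply Hu|auto].
  - intros Hconst. apply (constant_loops_antisymmetric E B rho); auto.
Qed.
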